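(* Let $n\ge2$, let $A=(a_{ij})\in\mathbb{R}^{n\times n}$ be pseudo-diagonalizable, and suppose $\max\{a_{11},\dots,a_{nn}\}\le0$. Then $\lambda(A)=0$, $\Gamma(A_\lambda)=I\oplus A$, and $d(A)=1$. Moreover, for any $i\in[n]$, letting $v^{(i)}$ be the vector obtained from the $i$-th column $A_i$ of $A$ by replacing its $i$-th entry by $0$, the set $\{v^{(i)}\}$ is a basis of $V(A)$, i.e. $V(A)=\{\alpha\otimes v^{(i)}:\alpha\in\overline{\mathbb{R}}\}$.
   Context: Max-plus conventions: $\overline{\mathbb{R}}=\mathbb{R}\cup\{-\infty\}$, $\varepsilon=-\infty$, $\oplus=\max$ (entrywise for matrices), $\otimes=+$; $(A\otimes B)_{ij}=\max_t(A_{it}+B_{tj})$, $(\alpha\otimes x)_i=\alpha+x_i$. $I$ is the matrix with $0$ on the diagonal and $\varepsilon$ elsewhere. $P$ is invertible iff it has exactly one real entry in each row and column (others $\varepsilon$); $A,B$ similar if $B=P^{-1}\otimes A\otimes P$ for invertible $P$. Pseudo-diagonal: real diagonal, off-diagonal entries equal to real $0$; pseudo-diagonalizable: similar to a pseudo-diagonal matrix. For finite $A$: $\lambda(A)$ is the maximum cycle mean $\max\{(a_{i_1i_2}+\dots+a_{i_ki_1})/k\}$ over $k\ge1$ and distinct $i_1,\dots,i_k$, the unique eigenvalue; $V(A)=\{x\in\overline{\mathbb{R}}^n:A\otimes x=\lambda(A)\otimes x\}$; $A_\lambda=(-\lambda(A))\otimes A$; $\Gamma(A)=A\oplus A^2\oplus\dots\oplus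 A^n$. A basis of a subspace is an independent generating set with respect to max-combinations; $d(A)$ is the number of elements of a basis of $V(A)$. *)

(* The max-plus semiring  Rbar = R ∪ {-oo}  is represented by [option R],
   with [None] = epsilon = -oo and [Some x] = the real x. *)
From HB Require Import structures.
From mathcomp Require Import all_boot all_order all_algebra.
Set Implicit Arguments. Unset Strict Implicit. Unset Printing Implicit Defensive.
Import Order.TTheory GRing.Theory Num.Theory.
Local Open Scope ring_scope.

Section MaxPlus.
Variable R : realFieldType.

Notation mp := (option R).

Definition mp_add (a b : mp) : mp :=
  match a, b with
  | None, _ => b
  | _, None => a
  | Some x, Some y => Some (Num.max x y)
  end.

Definition mp_mul (a b : mp) : mp :=
  match a, b with
  | Some x, Some y => Some (x + y)
  | _, _ => None
  end.

Definition mp_eps_mx m p : 'M[mp]_(m, p) := const_mx None.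

Definition mp_addmx m p (A B : 'M[mp]_(m, p)) : 'M[mp]_(m, p) :=
  \matrix_(i, j) mp_add (A i j) (B i j).

Definition mp_mulmx m q p (A : 'M[mp]_(m, q)) (B : 'M[mp]_(q, p)) : 'M[mp]_(m, p) :=
  \matrix_(i, j) \big[mp_add/None]_(t < q) mp_mul (A i t) (B t j).

Definition mp_scale m p (a : mp) (B : 'M[mp]_(m, p)) : 'M[mp]_(m, p) :=
  \matrix_(i, j) mp_mul a (B i j).

Definition mp_id n : 'M[mp]_n := \matrix_(i, j) if i == j then Some 0 else None.

Fixpoint mp_pow n (A : 'M[mp]_n) (k : nat) : 'M[mp]_n :=
  match k with
  | 0 => mp_id n
  | k'.+1 => mp_mulmx (mp_pow A k') A
  end.

Definition mp_Gamma n (A : 'M[mp]_n) : 'M[mp]_n :=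
  \big[@mp_addmx n n/mp_eps_mx n n]_(k < n) mp_pow A k.+1.

Definition fin_mx m p (A : 'M[R]_(m, p)) : 'M[mp]_(m, p) := map_mx Some A.

Definition mp_invertible n (P : 'M[mp]_n) : Prop :=
  (forall i, #|[set j | P i j != None]| = 1%N) /\
  (forall j, #|[set i | P i j != None]| = 1%N).

Definition mp_similar n (A B : 'M[mp]_n) : Prop :=
  exists P Q : 'M[mp]_n,
    [/\ mp_invertible P, mp_mulmx P Q = mp_id n, mp_mulmx Q P = mp_id n
      & B = mp_mulmx (mp_mulmx Q A) P].

Definition pseudo_diagonal n (D : 'M[mp]_n) : Prop :=
  (forall i, D i i != None) /\ (forall i j, i != j -> D i j = Some 0).

Definition pseudo_diagonalizable n (A : 'M[mp]_n) : Prop :=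
  exists D, pseudo_diagonal D /\ mp_similar A D.

(* cycle means of a finite matrix: a cycle of length k.+1 through distinct
   indices is an injective f : 'I_k.+1 -> 'I_n *)
Definition cycle_mean n (A : 'M[R]_n) k (f : {ffun 'I_k.+1 -> 'I_n}) : R :=
  (\sum_(t < k.+1) A (f t) (f (inord (t.+1 %% k.+1)))) / k.+1%:R.

Definition cycle_means n (A : 'M[R]_n) : seq R :=
  flatten [seq map (@cycle_mean n A k) (filter (fun g : {ffun 'I_k.+1 -> 'I_n} => injectiveb (fun t => g t)) (enum {ffun 'I_k.+1 -> 'I_n}))
          | k <- iota 0 n].

(* lambda(A): maximum cycle mean (the list is nonempty for n >= 1) *)
Definition mcm n (A : 'M[R]_n) : R :=
  foldr Num.max (head 0 (cycle_means A)) (cycle_means A).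

Definition A_lambda n (A : 'M[R]_n) : 'M[R]_n :=
  \matrix_(i, j) (A i j - mcm A).

Definition mp_eigenspace n (A : 'M[R]_n) (x : 'cV[mp]_n) : Prop :=
  mp_mulmx (fin_mx A) x = mp_scale (Some (mcm A)) x.

Definition in_span n (G : seq 'cV[mp]_n) (x : 'cV[mp]_n) : Prop :=
  exists a : 'I_(size G) -> mp,
    forall i, x i 0 = \big[mp_add/None]_(j < size G)
                         mp_mul (a j) (nth (mp_eps_mx n 1) G j i 0).

Definition mp_independent n (G : seq 'cV[mp]_n) : Prop :=
  forall j, (j < size G)%N ->
    ~ in_span (take j G ++ drop j.+1 G) (nth (mp_eps_mx n 1) G j).

Definition is_basis n (S : 'cV[mp]_n -> Prop) (G : seq 'cV[mp]_n) : Prop :=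
  mp_independent G /\ (forall x, S x <-> in_span G x).

Definition mp_dim_eq n (S : 'cV[mp]_n -> Prop) (d : nat) : Prop :=
  (exists G, is_basis S G /\ size G = d) /\
  (forall G, is_basis S G -> size G = d).

Definition vcol n (A : 'M[R]_n) (i : 'I_n) : 'cV[mp]_n :=
  \col_j (if j == i then Some 0 else Some (A j i)).

End MaxPlus.

From HB Require Import structures.
From mathcomp Require Import all_boot all_order all_algebra.
From mathcomp Require Import lra.
Set Implicit Arguments. Unset Strict Implicit. Unset Printing Implicit Defensive.
Import Order.TTheory GRing.Theory Num.Theory.
Local Open Scope ring_scope.

(* An invertible max-plus matrix is monomial (a permutation matrix with real
   weights p), so conjugating A by it to a pseudo-diagonal matrix says that
   a_kl = d_k - d_l off the diagonal for the potential d = p.  With a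
   nonpositive diagonal, A is bounded entrywise by d_k - d_l, hence so are all
   its max-plus powers and all cycle weights telescope to at most 0, while
   every 2-cycle has weight exactly 0.  This gives lambda(A) = 0 and
   Gamma(A) = I ⊕ A.  An eigenvector x satisfies x_k >= a_kl + x_l for k <> l
   and, symmetrically, x_l >= a_lk + x_k, so x_k = d_k - d_l + x_l: V(A) is
   the max-plus line through the column (d_k - d_i)_k, which is v^(i). *)

Section MaxPlusOrder.
Variable R : realFieldType.
Notation mp := (option R).

Lemma mp_addA : associative (@mp_add R).
Proof. by case=> [x|] [y|] [z|] //=; rewrite maxA. Qed.

Lemma mp_addC : commutative (@mp_add R).
Proof. by case=> [x|] [y|] //=; rewrite maxC. Qed.

Lemma mp_add0l : left_id None (@mp_add R).
Proof. by case. Qed.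

HB.instance Definition _ :=
  Monoid.isComLaw.Build mp None (@mp_add R) mp_addA mp_addC mp_add0l.

Lemma mp_mul0l (a : mp) : mp_mul (Some 0) a = a.
Proof. by case: a => //= x; rewrite add0r. Qed.

Lemma mp_mulr0 (a : mp) : mp_mul a None = None.
Proof. by case: a. Qed.

Lemma mp_mulC : commutative (@mp_mul R).
Proof. by case=> [x|] [y|] //=; rewrite addrC. Qed.

Lemma mp_mulA : associative (@mp_mul R).
Proof. by case=> [x|] [y|] [z|] //=; rewrite addrA. Qed.

Definition mp_le (a b : mp) : bool :=
  match a, b with
  | None, _ => true
  | Some _, None => false
  | Some x, Some y => x <= y
  end.

Lemma mp_le_refl a : mp_le a a.
Proof. by case: a => //= x. Qed.

Lemma mp_le_trans a b c : mp_le a b -> mp_le b c -> mp_le a c.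
Proof. by case: a => [x|] //; case: b => [y|] //; case: c => [z|] //=; apply: le_trans. Qed.

Lemma mp_le_anti a b : mp_le a b -> mp_le b a -> a = b.
Proof. by case: a => [x|]; case: b => [y|] //= xy yx; rewrite (@le_anti _ _ x y) ?xy. Qed.

Lemma mp_le_add a b c : mp_le (mp_add a b) c = mp_le a c && mp_le b c.
Proof. by case: a => [x|]; case: b => [y|]; case: c => [z|] //=; rewrite ?ge_max ?andbT. Qed.

Lemma mp_le_addl a b : mp_le a (mp_add a b).
Proof. by case: a => [x|]; case: b => [y|] //=; rewrite ?le_max ?lexx. Qed.

Lemma mp_le_big (I : finType) (F : I -> mp) b :
  (forall t, mp_le (F t) b) -> mp_le (\big[@mp_add R/None]_t F t) b.
Proof.
move=> Fb; elim/big_ind: _ => // x y xb yb.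
by rewrite mp_le_add xb yb.
Qed.

Lemma mp_le_big_term (I : finType) (F : I -> mp) t0 :
  mp_le (F t0) (\big[@mp_add R/None]_t F t).
Proof. by rewrite (bigD1 t0) //= mp_le_addl. Qed.

Lemma mp_big_only1 (I : finType) (F : I -> mp) t0 :
  (forall t, t != t0 -> F t = None) -> \big[@mp_add R/None]_t F t = F t0.
Proof. by move=> F0; rewrite (big_only1 t0) // => t /F0. Qed.

Lemma foldr_max_le (h : R) s b :
  h <= b -> (forall x, x \in s -> x <= b) -> foldr Num.max h s <= b.
Proof.
move=> hb; elim: s => //= y s IHs sb; rewrite ge_max sb ?mem_head //=.
by apply: IHs => x xs; rewrite sb // in_cons xs orbT.
Qed.

Lemma foldr_max_ge (h : R) s x : x \in s -> x <= foldr Num.max h s.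
Proof.
elim: s => //= y s IHs; rewrite in_cons le_max => /orP[/eqP-> | /IHs->].
  by rewrite lexx.
by rewrite orbT.
Qed.

End MaxPlusOrder.

Section Span.
Variables (R : realFieldType) (n : nat).
Notation vec := 'cV[option R]_n.
Notation eps := (mp_eps_mx R n 1).

Lemma mp_scale_id (x : vec) : mp_scale (Some 0) x = x.
Proof. by apply/matrixP => i j; rewrite mxE mp_mul0l. Qed.

Lemma mp_scaleA a b (x : vec) :
  mp_scale a (mp_scale b x) = mp_scale (mp_mul a b) x.
Proof. by apply/matrixP => i j; rewrite !mxE mp_mulA. Qed.

Lemma mp_scale_eps (x y : vec) : mp_scale None x = mp_scale None y.
Proof. by apply/matrixP => i j; rewrite !mxE. Qed.

Lemma in_span0 (x : vec) : in_span [::] x -> x = eps.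
Proof. by case=> a xE; apply/matrixP => i j; rewrite [j]ord1 xE big_ord0 mxE. Qed.

Lemma in_span1P (w x : vec) : in_span [:: w] x <-> exists a, x = mp_scale a w.
Proof.
split=> [[a xE] | [a ->]].
  by exists (a ord0); apply/matrixP => i j; rewrite [j]ord1 xE big_ord1 mxE.
by exists (fun=> a) => i; rewrite big_ord1 mxE.
Qed.

Lemma in_span_scale_nth (G : seq vec) j a :
  (j < size G)%N -> in_span G (mp_scale a (nth eps G j)).
Proof.
move=> jG; exists (fun t : 'I_(size G) => if val t == j then a else None) => i.
rewrite (mp_big_only1 (t0 := Ordinal jG)) /= ?eqxx ?mxE // => t tj.
by rewrite ifN //; apply: contra tj => /eqP tjE; apply/eqP/val_inj.
Qed.

Lemma mp_independent_multiples (G : seq vec) (v : vec) :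
  mp_independent G -> (forall g, g \in G -> exists a, g = mp_scale a v) ->
  (size G <= 1)%N.
Proof.
case: G => [|g0 [|g1 G]] //= indG Gv.
have [a g0E] := Gv g0 (mem_head _ _).
have [[b|] g1E] := Gv g1 (@mem_behead _ (g0 :: _) _ (mem_head _ _)).
  (* g0 = (a - b) ⊗ g1 *)
  exfalso; apply: (indG 0%N) => //=.
  have -> : g0 = mp_scale (mp_mul a (Some (- b))) g1.
    by rewrite g1E mp_scaleA -mp_mulA /= addNr mp_mulC mp_mul0l.
  exact: (@in_span_scale_nth (g1 :: G) 0).
exfalso; apply: (indG 1%N) => //=.
by rewrite g1E (mp_scale_eps v g0) drop0; apply: (@in_span_scale_nth (g0 :: G) 0).
Qed.

Section Line.
Variables (S : vec -> Prop) (v : vec).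
Hypotheses (Sv : forall x, S x <-> exists a, x = mp_scale a v) (v_neq0 : v <> eps).

Lemma is_basis_line : is_basis S [:: v].
Proof.
split=> [[|//] _ /in_span0 // | x].
by rewrite Sv in_span1P.
Qed.

Lemma mp_dim_line : mp_dim_eq S 1.
Proof.
split=> [|G [indG spanG]]; first by exists [:: v]; split; [exact: is_basis_line |].
have GS g : g \in G -> S g.
  case/(nthP eps)=> j jG <-; apply/spanG.
  by rewrite -[nth _ _ _]mp_scale_id; apply: in_span_scale_nth.
have := mp_independent_multiples indG (fun g gG => proj1 (Sv g) (GS g gG)).
case: G {indG GS} spanG => [spanG _ | g [|//] _ _ //].
exfalso; apply/v_neq0/in_span0/spanG/Sv.
by exists (Some 0); rewrite mp_scale_id.
Qed.

End Line.
End Span.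

Lemma card_set_pred1P (T : finType) (p : pred T) :
  #|[set x | p x]| = 1%N -> exists x, forall y, p y = (y == x).
Proof. by move/eqP/cards1P=> [x pE]; exists x => y; rewrite -in_set1 -pE inE. Qed.

Section Monomial.
Variables (R : realFieldType) (n : nat).
Notation mx := 'M[option R]_n.

Lemma mp_invertible_monomial (P : mx) : mp_invertible P ->
  exists (c : 'I_n -> 'I_n) (p : 'I_n -> R), injective c /\
    forall t k, P t (c k) = if t == k then Some (p k) else None.
Proof.
case=> rowP colP.
have [c cE] := fin_all_exists (fun i => card_set_pred1P (rowP i)).
have [r rE] := fin_all_exists (fun j => card_set_pred1P (colP j)).
have rcK : cancel c r by move=> k; apply/eqP; rewrite eq_sym -rE cE.
exists c, (fun k => odflt 0 (P k (c k))); split; first exact: can_inj rcK.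
move=> t k; case: eqP => [-> | /eqP tk].
  by move: (cE k (c k)); rewrite eqxx; case: (P k (c k)).
by apply/eqP; apply: contraNT tk; rewrite rE rcK.
Qed.

Section Conjugate.
Variables (P Q : mx) (c : 'I_n -> 'I_n) (p : 'I_n -> R).
Hypotheses (c_inj : injective c)
  (PE : forall t k, P t (c k) = if t == k then Some (p k) else None)
  (QP : mp_mulmx Q P = mp_id R n).

Lemma mp_inverse_monomial i k :
  Q i k = if i == c k then Some (- p k) else None.
Proof.
have := congr1 (fun M : mx => M i (c k)) QP; rewrite !mxE.
rewrite (mp_big_only1 (t0 := k)) => [|t /negbTE tk]; last by rewrite PE tk mp_mulr0.
rewrite PE eqxx; case: (Q i k) => [q|]; case: eqP => //= _ [qE].
by congr Some; lra.
Qed.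

Lemma mp_conj_monomial (A : 'M[R]_n) k l :
  mp_mulmx (mp_mulmx Q (fin_mx A)) P (c k) (c l) = Some (A k l + p l - p k).
Proof.
rewrite mxE (mp_big_only1 (t0 := l)) => [|t /negbTE tl]; last by rewrite PE tl mp_mulr0.
rewrite mxE (mp_big_only1 (t0 := k)) => [|s sk]; last first.
  by rewrite mp_inverse_monomial (inj_eq c_inj) eq_sym (negbTE sk).
by rewrite mp_inverse_monomial eqxx PE eqxx mxE /=; congr Some; lra.
Qed.

End Conjugate.

Lemma pseudo_diagonalizable_potential (A : 'M[R]_n) :
  pseudo_diagonalizable (fin_mx A) ->
  exists d : 'I_n -> R, forall k l, k != l -> A k l = d k - d l.
Proof.
case=> D [[_ D_off] [P [Q [/mp_invertible_monomial [c [p [c_inj PE]]] _ QP DE]]]].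
exists p => k l kl.
have := D_off (c k) (c l); rewrite (inj_eq c_inj) DE (mp_conj_monomial c_inj PE QP).
by move=> /(_ kl) [Akl]; lra.
Qed.

End Monomial.

Lemma ord_exists_neq n (k : 'I_n) : (1 < n)%N -> exists l : 'I_n, l != k.
Proof.
move=> n_gt1; have [k0 | k_neq0] := eqVneq (val k) 0%N.
  by exists (Ordinal n_gt1); apply/eqP => /(congr1 val) /=; rewrite k0.
by exists (Ordinal (ltnW n_gt1)); apply: contraNneq k_neq0 => <-.
Qed.

Section MaxPlusMatrix.
Variables (R : realFieldType) (n : nat).

Lemma mp_mul1mx p (B : 'M[option R]_(n, p)) : mp_mulmx (mp_id R n) B = B.
Proof.
apply/matrixP => i j; rewrite mxE (mp_big_only1 (t0 := i)) => [|t ti].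
  by rewrite mxE eqxx mp_mul0l.
by rewrite mxE eq_sym (negbTE ti).
Qed.

Lemma mp_GammaE (B : 'M[option R]_n) i j :
  mp_Gamma B i j = \big[@mp_add R/None]_(k < n) mp_pow B k.+1 i j.
Proof. by apply: (big_morph (fun M : 'M_n => M i j)) => [M N|]; rewrite !mxE. Qed.

Lemma vcol_neq_eps (A : 'M[R]_n) i : vcol A i <> mp_eps_mx R n 1.
Proof. by move/matrixP/(_ i 0); rewrite !mxE eqxx. Qed.

End MaxPlusMatrix.

Section Potential.
Variables (R : realFieldType) (n : nat) (A : 'M[R]_n) (d : 'I_n -> R).
Hypotheses (n_gt1 : (1 < n)%N) (A_pot : forall k l, k != l -> A k l = d k - d l)
  (A_diag : forall i, A i i <= 0).

Lemma le_pot k l : A k l <= d k - d l.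
Proof. by have [->|/A_pot->] := eqVneq k l; rewrite ?subrr ?A_diag. Qed.

(* the potential telescopes along any closed walk *)
Lemma cycle_mean_le0 k (f : {ffun 'I_k.+1 -> 'I_n}) : cycle_mean A f <= 0.
Proof.
rewrite /cycle_mean pmulr_lle0 ?invr_gt0 ?ltr0Sn //.
apply: le_trans (ler_sum _ (fun t _ => le_pot _ _)) _.
rewrite sumrB subr_le0 le_eqVlt (reindex_inj (@ordS_inj _)).
apply/orP; left; apply/eqP/eq_bigr => t _.
by congr (d (f _)); apply: val_inj; rewrite /= inordK // ltn_pmod.
Qed.

Lemma cycle_means_le0 x : x \in cycle_means A -> x <= 0.
Proof. by case/flatten_mapP=> k _ /mapP [f _ ->]; apply: cycle_mean_le0. Qed.

(* every 2-cycle has mean 0 *)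
Lemma cycle_means_has0 : 0 \in cycle_means A.
Proof.
pose i0 := Ordinal (ltnW n_gt1); pose i1 := Ordinal n_gt1.
have i01 : i0 != i1 by [].
pose f : {ffun 'I_2 -> 'I_n} := [ffun t : 'I_2 => if val t == 0%N then i0 else i1].
apply/flatten_mapP; exists 1%N; first by rewrite mem_iota.
apply/mapP; exists f.
  rewrite mem_filter mem_enum andbT; apply/injectiveP => t s; rewrite !ffunE.
  by case: t s => [[|[|t]] ?] [[|[|s]] ?] //= E; apply: val_inj; rewrite //= E eqxx in i01.
rewrite /cycle_mean !big_ord_recl big_ord0 /= !ffunE /= !inordK //=.
by rewrite A_pot // A_pot 1?eq_sym // addr0 addrA subrK subrr mul0r.
Qed.

Lemma mcm_pot : mcm A = 0.
Proof.
apply/eqP; rewrite eq_le foldr_max_ge ?cycle_means_has0 // andbT.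
apply: foldr_max_le cycle_means_le0; case E: (cycle_means A) => [|y s] //=.
by apply: cycle_means_le0; rewrite E mem_head.
Qed.

Lemma A_lambda_pot : A_lambda A = A.
Proof. by apply/matrixP => i j; rewrite mxE mcm_pot subr0. Qed.

Lemma mp_pow_le_pot k i j : mp_le (mp_pow (fin_mx A) k i j) (Some (d i - d j)).
Proof.
elim: k i j => [|k IHk] i j /=.
  by rewrite mxE; case: eqP => [->|] //=; rewrite subrr.
rewrite mxE; apply: mp_le_big => t; rewrite mxE.
move: (IHk i t); case: (mp_pow _ k i t) => //= a ait.
by have := le_pot t j; lra.
Qed.

Lemma mp_Gamma_pot : mp_Gamma (fin_mx A) = mp_addmx (mp_id R n) (fin_mx A).
Proof.
apply/matrixP => i j; rewrite mp_GammaE !mxE; apply: mp_le_anti.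
  apply: mp_le_big => k; apply: mp_le_trans (mp_pow_le_pot _ _ _) _.
  by case: eqP => [->|/eqP/A_pot->] /=; rewrite ?subrr ?le_max ?lexx.
have [<- | ij] := eqVneq i j; last first.
  apply: mp_le_trans _ (mp_le_big_term _ (Ordinal (ltnW n_gt1))).
  by rewrite /= mp_mul1mx mxE lexx.
(* the diagonal of A^2 reaches 0 through any 2-cycle *)
have -> : mp_add (Some 0) (Some (A i i)) = Some 0 by rewrite /= max_l ?A_diag.
have [l li] := ord_exists_neq i n_gt1.
apply: mp_le_trans _ (mp_le_big_term _ (Ordinal n_gt1)).
change (mp_le (Some 0) (mp_mulmx (mp_mulmx (mp_id R n) (fin_mx A)) (fin_mx A) i i)).
rewrite mp_mul1mx mxE; apply: mp_le_trans _ (mp_le_big_term _ l).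
rewrite !mxE /= A_pot 1?eq_sym // A_pot //.
by rewrite addrA subrK subrr lexx.
Qed.

Lemma mp_eigenspace_pot x :
  mp_eigenspace A x <-> forall k l, x k 0 = mp_mul (Some (d k - d l)) (x l 0).
Proof.
rewrite /mp_eigenspace mcm_pot; split=> [Ax k l | x_pot].
  have xE k' : x k' 0 = \big[@mp_add R/None]_t mp_mul (Some (A k' t)) (x t 0).
    move/matrixP/(_ k' 0): Ax; rewrite !mxE mp_mul0l => <-.
    by apply: eq_bigr => t; rewrite mxE.
  have ge k' l' : k' != l' -> mp_le (mp_mul (Some (d k' - d l')) (x l' 0)) (x k' 0).
    by move=> kl; rewrite -A_pot // [x k' 0]xE; apply: mp_le_big_term.
  have [->|kl] := eqVneq k l; first by rewrite subrr mp_mul0l.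
  have := ge k l kl; have := ge l k; rewrite eq_sym => /(_ kl).
  by case: (x l 0) => [a|]; case: (x k 0) => [b|] //= ? ?; congr Some; lra.
apply/matrixP => k j; rewrite [j]ord1 !mxE mp_mul0l; apply: mp_le_anti.
  apply: mp_le_big => l; rewrite mxE (x_pot k l).
  by case: (x l 0) => //= a; have := le_pot k l; lra.
have [l lk] := ord_exists_neq k n_gt1.
apply: mp_le_trans _ (mp_le_big_term _ l).
by rewrite mxE A_pot 1?eq_sym // -x_pot mp_le_refl.
Qed.

Lemma vcol_pot i : vcol A i = \col_k Some (d k - d i).
Proof.
by apply/matrixP => k j; rewrite !mxE; case: eqP => [->|/eqP/A_pot->]; rewrite ?subrr.
Qed.

Lemma mp_eigenspace_vcol i x :
  mp_eigenspace A x <-> exists a, x = mp_scale a (vcol A i).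
Proof.
rewrite mp_eigenspace_pot; split=> [x_pot | [a ->] k l].
  exists (x i 0); apply/matrixP => k j.
  by rewrite [j]ord1 vcol_pot !mxE mp_mulC -x_pot.
rewrite vcol_pot !mxE; case: a => //= a; congr Some; lra.
Qed.

End Potential.

Theorem theorem5p8 (R : realFieldType) (n : nat) (A : 'M[R]_n) :
  (2 <= n)%N ->
  pseudo_diagonalizable (fin_mx A) ->
  (forall i, A i i <= 0) ->
  [/\ mcm A = 0,
      mp_Gamma (fin_mx (A_lambda A)) = mp_addmx (mp_id R n) (fin_mx A),
      mp_dim_eq (mp_eigenspace A) 1
    & forall i : 'I_n,
        is_basis (mp_eigenspace A) [:: vcol A i] /\
        (forall x, mp_eigenspace A x <-> exists a : option R, x = mp_scale a (vcol A i))].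
Proof.
move=> n_gt1 /pseudo_diagonalizable_potential [d A_pot] A_diag.
have eigE := mp_eigenspace_vcol n_gt1 A_pot A_diag.
split.
- exact: mcm_pot n_gt1 A_pot A_diag.
- by rewrite (A_lambda_pot n_gt1 A_pot A_diag) (mp_Gamma_pot n_gt1 A_pot A_diag).
- exact: mp_dim_line (eigE (Ordinal n_gt1)) (@vcol_neq_eps _ _ A _).
- by move=> i; split; [apply: is_basis_line (eigE i) (@vcol_neq_eps _ _ A _) | apply: eigE].
Qed.
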